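(* Let $0<\theta<1$, let $\rho,\tau$ be positive integers with $\rho\le\tau$, and let $m=2^\beta$ for some $\beta\in\mathbb{N}=\{0,1,2,\dots\}$. Then $$L_m^{\rho/\tau}(\theta)=\int_{-\infty}^{\infty}\ell_m^{\rho/\tau}(\varepsilon)\,f_\theta(\varepsilon)\,d\varepsilon = 1+\lg m+\frac{1}{2}\,\frac{\theta^{m/2}}{1-\theta^{m/2}}\left(\theta^{\frac{\rho}{2\tau}}+\theta^{-\frac{\rho}{2\tau}}\right).$$
   Context: $\lg$ denotes $\log_2$. The Laplace density with parameter $\theta\in(0,1)$ is $f_\theta(\varepsilon)=-\frac{\ln\theta}{2}\theta^{|\varepsilon|}$, $\varepsilon\in\mathbb{R}$. The generalized Rice mapping $M:\mathbb{R}\to\mathbb{Z}_{\ge0}$ is $M(\varepsilon)=\lfloor 2\varepsilon\rfloor$ if $\varepsilon\ge 0$ and $M(\varepsilon)=-\lfloor 2\varepsilon\rfloor-1$ if $\varepsilon<0$. For a positive integer $m$, the Golomb codeword of a non-negative integer $N$ consists of $j=\lfloor N/m\rfloor$ in unary ($j+1$ bits) followed by $k=N \bmod m$ in minimal binary, which uses $\lfloor\lg m\rfloor$ bits if $k<2^{\lceil\lg m\rceil}-m$ and $\lceil\lg m\rceil$ bits otherwise; let $\lambda_m(N)$ be the total number of bits. The (finest-precision) code length of a real residual $\varepsilon$ is $\ell_m(\varepsilon)=\lambda_m(M(\varepsilon))$. For positive integers $\rho\le\tau$ (precision $\rho/\tau$), the code length assigned to the real residual $\varepsilon$ at precision $\rho/\tau$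 is modeled as the finest-precision assignment shifted left by $\rho/(2\tau)$: $\ell_m^{\rho/\tau}(\varepsilon)=\ell_m(\varepsilon+\rho/(2\tau))$. $L_m^{\rho/\tau}(\theta)$ denotes the average code length under the Laplace density, as in the claim. *)

From HB Require Import structures.
From mathcomp Require Import all_boot all_order all_algebra.
From mathcomp Require Import all_classical all_reals all_analysis.
Set Implicit Arguments. Unset Strict Implicit. Unset Printing Implicit Defensive.
Import Order.TTheory GRing.Theory Num.Theory.
Local Open Scope ring_scope.

Definition lg {R : realType} (x : R) : R := ln x / ln 2.

Definition laplace {R : realType} (theta e : R) : R :=
  - ln theta / 2 * theta `^ `|e|.

Definition rice_map {R : realType} (e : R) : nat :=
  if 0 <= e then `|Num.floor (2 * e)|%N
  else `|- Num.floor (2 * e) - 1|%N.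

(* Golomb codeword length lambda_m(N): unary part (j+1 bits) plus minimal
   binary part; floor(lg m) = trunc_log 2 m, ceil(lg m) = up_log 2 m. *)
Definition golomb_len (m N : nat) : nat :=
  let j := (N %/ m)%N in
  let k := (N %% m)%N in
  (j.+1 + (if (k < 2 ^ up_log 2 m - m)%N then trunc_log 2 m else up_log 2 m))%N.

Definition code_len {R : realType} (m : nat) (e : R) : R :=
  (golomb_len m (rice_map e))%:R.

Definition code_len_prec {R : realType} (m rho tau : nat) (e : R) : R :=
  code_len m (e + rho%:R / (2 * tau%:R)).

Definition avg_code_len {R : realType} (m rho tau : nat) (theta : R) : \bar R :=
  (\int[@lebesgue_measure R]_(e in [set: R])
     (code_len_prec m rho tau e * laplace theta e)%:E)%E.

From mathcomp Require Import all_boot all_order all_algebra.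
From mathcomp Require Import all_classical all_reals all_analysis measurable_realfun.
From mathcomp Require Import zify ring lra.
Import Order.TTheory GRing.Theory Num.Theory.
Import numFieldNormedType.Exports.
Local Open Scope ring_scope.
Local Open Scope classical_set_scope.

(* For m = 2^beta the minimal binary part is plain beta-bit binary, so the
   code length of a residual with Rice index N is 1 + beta + N %/ m, and
   N %/ m counts the j >= 1 with j m <= N.  By the definition of the Rice map,
   M(x) >= K > 0 exactly when x lies on one of the rays 2x >= K, 2x < -K;
   after the shift s = rho/(2 tau) <= 1/2 these rays are [K/2 - s, +oo[ and
   ]-oo, -(K/2 + s)[, of Laplace mass (theta^(K/2 - s) + theta^(K/2 + s))/2.
   Integrating term by term, the masses for K = j m form a geometric series
   of ratio theta^(m/2), whose sum gives the formula. *)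

Lemma golomb_len_pow2 b N : golomb_len (2 ^ b) N = (1 + b + N %/ 2 ^ b)%N.
Proof. rewrite /golomb_len trunc_expnK // up_expnK // subnn ltn0; lia. Qed.

Lemma lg_pow2 (R : realType) b : lg ((2 ^ b)%:R : R) = b%:R.
Proof.
have ln2_gt0 : 0 < ln (2 : R) by rewrite ln_gt0 // ltr1n.
by rewrite /lg natrX lnXn // mulrnAl divff ?gt_eqF.
Qed.

Lemma nneseries_indicator_divn (R : realType) (m N : nat) (a : R) :
  (0 < m)%N -> 0 <= a ->
  (\sum_(j <oo) ((((j.+1 * m <= N)%N : nat)%:R * a)%:E) = ((N %/ m)%:R * a)%:E)%E.
Proof.
move=> m_gt0 a_ge0; set q := (N %/ m)%N.
rewrite (nneseries_split 0 q); last by move=> k _; rewrite lee_fin mulr_ge0.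
rewrite add0n eseries0 ?adde0; last first.
  move=> j qj _; suff -> : (j.+1 * m <= N)%N = false by rewrite mul0r.
  by apply/negbTE; rewrite -ltnNge -ltn_divLR // ltnS.
rewrite sumEFin (@eq_big_nat _ _ _ 0 q _ (fun _ => a)); last first.
  move=> j /andP[_ jq]; suff -> : (j.+1 * m <= N)%N by rewrite mul1r.
  by rewrite (leq_trans _ (leq_divM N m)) // leq_mul2r jq orbT.
by rewrite sumr_const_nat subn0 mulr_natl.
Qed.

Lemma code_len_pow2_nneseries (R : realType) beta (e a : R) : 0 <= a ->
  ((code_len (2 ^ beta) e * a)%:E = ((1 + beta)%:R * a)%:E
    + \sum_(j <oo) ((((j.+1 * 2 ^ beta <= rice_map e)%N : nat)%:R * a)%:E))%E.
Proof.
move=> a_ge0; rewrite nneseries_indicator_divn ?expn_gt0 //.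
by rewrite /code_len golomb_len_pow2 natrD mulrDl EFinD.
Qed.

Lemma leq_rice_map (R : realType) (x : R) (K : nat) : (0 < K)%N ->
  (K <= rice_map x)%N = (K%:R <= 2 * x) || (2 * x < - K%:R).
Proof.
move=> K_gt0; rewrite /rice_map; case: ifPn => x_ge0.
- have fl_ge0 : (0 <= Num.floor (2 * x))%R by rewrite floor_ge0 mulr_ge0.
  have -> : (K <= `|Num.floor (2 * x)|)%N = (K%:Z <= Num.floor (2 * x))%R.
    by apply/idP/idP; lia.
  rewrite floor_ge_int; suff -> : (2 * x < - K%:R) = false by rewrite orbF.
  by apply/negbTE; rewrite -leNgt (le_trans _ (mulr_ge0 _ x_ge0)).
- have x_lt0 : x < 0 by rewrite ltNge.
  have fl_lt0 : (Num.floor (2 * x) < 0)%R by rewrite floor_lt_int /= pmulr_rlt0.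
  have -> : (K <= `|- Num.floor (2 * x) - 1|)%N = (Num.floor (2 * x) < - K%:Z)%R.
    by apply/idP/idP; lia.
  rewrite floor_lt_int intrN; suff -> : (K%:R <= 2 * x) = false by [].
  by apply/negbTE; rewrite -ltNge (@lt_trans _ _ 0) ?ltr0n // pmulr_rlt0.
Qed.

Lemma rice_map_tail_patch (R : realType) (f : R -> R) (s : R) (K : nat) :
  (0 < K)%N ->
  (fun x => ((((K <= rice_map (x + s))%N : nat)%:R * f x)%:E)%E) =
  (EFin \o f) \_ (`[K%:R / 2 - s, +oo[ `|` `]-oo, - (K%:R / 2 + s)[).
Proof.
move=> K_gt0; apply/funext => x.
rewrite /patch leq_rice_map // in_setU !mem_setE !in_itv /= andbT.
have -> : (K%:R / 2 - s <= x) || (x < - (K%:R / 2 + s)) =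
          (K%:R <= 2 * (x + s)) || (2 * (x + s) < - K%:R).
  by apply/idP/idP => /orP[] h; apply/orP; [left|right|left|right]; lra.
by case: ifP; rewrite ?mul1r ?mul0r.
Qed.

Lemma is_derive_scale_expRM (R : realType) (k a x : R) :
  is_derive x 1 (fun y => k * expR (a * y)) (k * (expR (a * x) * a)).
Proof.
apply: is_deriveZ; apply: (@is_derive1_comp R expR ( *%R a)).
have := @is_deriveZ R R R id a x 1 1 (is_derive_id _ _).
by rewrite /GRing.scale /= mulr1.
Qed.

Lemma cvgy_expRM (R : realType) (a : R) : a < 0 ->
  expR (a * x) @[x --> +oo] --> 0.
Proof.
move=> a_lt0; have ay : (fun x => - a * x) @ +oo --> +oo.
  by apply/cvgryPge => A; near=> x; rewrite -ler_pdivrMl ?oppr_gt0.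
have := cvg_comp _ _ ay (@cvgr_expR R).
by rewrite /comp; under eq_fun do rewrite mulNr opprK.
Unshelve. all: by end_near.
Qed.

Section laplace_density.
Variables (R : realType) (theta : R).
Hypotheses (theta_gt0 : 0 < theta) (theta_lt1 : theta < 1).

Let ln_theta_lt0 : ln theta < 0. Proof. by rewrite ln_lt0 // theta_gt0. Qed.

Lemma laplaceE e : laplace theta e = - ln theta / 2 * expR (ln theta * `|e|).
Proof. by rewrite /laplace /powR gt_eqF // [_ * ln _]mulrC. Qed.

Lemma laplace_ge0 e : 0 <= laplace theta e.
Proof.
rewrite laplaceE mulr_ge0 ?expR_ge0 //.
by rewrite divr_ge0 // oppr_ge0 ltW.
Qed.

Lemma continuous_laplace : continuous (laplace theta).
Proof.
have -> : laplace theta = fun e => - ln theta / 2 * expR (ln theta * `|e|).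
  by apply/funext => e; exact: laplaceE.
move=> x; apply: cvgM; first exact: cvg_cst.
apply: (@continuous_comp _ _ _ (fun e => ln theta * `|e|) expR);
  last exact: continuous_expR.
by apply: cvgM; [exact: cvg_cst | exact: norm_continuous].
Qed.

Lemma measurable_laplace (D : set R) : measurable_fun D (EFin \o laplace theta).
Proof.
apply/measurable_EFinP; apply: measurable_funTS.
exact: continuous_measurable_fun continuous_laplace.
Qed.

Lemma integral_laplace_itv_ge c : 0 <= c ->
  (\int[@lebesgue_measure R]_(x in `[c, +oo[) (laplace theta x)%:E
    = (theta `^ c / 2)%:E)%E.
Proof.
move=> c_ge0; have dF := @is_derive_scale_expRM R (- 2^-1) (ln theta).
rewrite (@ge0_continuous_FTC2y R (laplace theta)
  (fun x => - 2^-1 * expR (ln theta * x)) c 0).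
- rewrite sub0e -EFinN mulNr opprK /powR gt_eqF //; congr EFin.
  by rewrite (mulrC c); exact: mulrC.
- by move=> x _; exact: laplace_ge0.
- by apply: continuous_subspaceT => x; exact: continuous_laplace.
- rewrite -(mulr0 (- 2^-1)); apply: cvgM; first exact: cvg_cst.
  exact: cvgy_expRM.
- by move=> x _; apply: ex_derive; exact: dF.
- apply: cvg_at_right_filter; apply: cvgM; first exact: cvg_cst.
  apply: (@continuous_comp _ _ _ ( *%R (ln theta)) expR);
    last exact: continuous_expR.
  by apply: cvgM; [exact: cvg_cst | exact: cvg_id].
- move=> x; rewrite in_itv /= andbT => cx.
  rewrite derive1E derive_val laplaceE ger0_norm; first ring.
  by rewrite (le_trans c_ge0) // ltW.
Qed.

Lemma integral_laplace_itv_lt c : 0 <= c ->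
  (\int[@lebesgue_measure R]_(x in `]-oo, (- c)%R[) (laplace theta x)%:E
    = (theta `^ c / 2)%:E)%E.
Proof.
move=> c_ge0; rewrite integral_itv_bndo_bndc; last exact: measurable_laplace.
rewrite ge0_integration_by_substitutionNy.
- rewrite -integral_laplace_itv_ge //; apply: eq_integral => x _.
  by rewrite /comp /laplace normrN.
- by apply: continuous_subspaceT => x; exact: continuous_laplace.
- by move=> x _; exact: laplace_ge0.
Qed.

Lemma integral_laplace_tails c1 c2 : 0 <= c1 -> 0 <= c2 ->
  (\int[@lebesgue_measure R]_(x in `[c1, +oo[ `|` `]-oo, (- c2)%R[)
     (laplace theta x)%:E = ((theta `^ c1 + theta `^ c2) / 2)%:E)%E.
Proof.
move=> c1_ge0 c2_ge0; rewrite ge0_integral_setU //.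
- by rewrite integral_laplace_itv_ge // integral_laplace_itv_lt // -EFinD mulrDl.
- exact: measurable_laplace.
- by move=> x _; rewrite lee_fin laplace_ge0.
- apply/disj_set2P; rewrite -subset0 => x [] /=; rewrite !in_itv /= andbT.
  lra.
Qed.

Lemma integral_laplace :
  (\int[@lebesgue_measure R]_(x in [set: R]) (laplace theta x)%:E = 1%:E)%E.
Proof.
rewrite (_ : [set: R] = `[0, +oo[ `|` `]-oo, (- 0)%R[); last first.
  apply/seteqP; split => x //= _; rewrite /= !in_itv /= andbT oppr0.
  by case: (leP 0 x) => h; [left|right].
by rewrite integral_laplace_tails // powRr0; congr EFin; lra.
Qed.

Lemma measurable_laplace_rice_tail (s : R) (K : nat) : (0 < K)%N ->
  measurable_fun [set: R]
    (fun x => ((((K <= rice_map (x + s))%N : nat)%:R * laplace theta x)%:E)%E).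
Proof.
move=> K_gt0; rewrite rice_map_tail_patch //; apply/(measurable_restrictT _ _).1.
- by apply: measurableU; exact: measurable_itv.
- exact: measurable_laplace.
Qed.

Lemma integral_laplace_rice_tail (s : R) (K : nat) :
  0 <= s -> s <= 1 / 2 -> (0 < K)%N ->
  (\int[@lebesgue_measure R]_(x in [set: R])
     ((((K <= rice_map (x + s))%N : nat)%:R * laplace theta x)%:E)
    = ((theta `^ (K%:R / 2 - s) + theta `^ (K%:R / 2 + s)) / 2)%:E)%E.
Proof.
move=> s_ge0 s_le_half K_gt0; have K_ge1 : 1 <= K%:R :> R by rewrite ler1n.
rewrite rice_map_tail_patch // -integral_mkcond integral_laplace_tails //; lra.
Qed.

Lemma rice_tail_mass_geometric (m j : nat) (s : R) :
  (theta `^ ((j.+1 * m)%:R / 2 - s) + theta `^ ((j.+1 * m)%:R / 2 + s)) / 2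
  = (theta `^ (- s) + theta `^ s) / 2 * theta `^ (m%:R / 2)
    * (theta `^ (m%:R / 2)) ^+ j.
Proof.
have theta_neq0 : theta != 0 by rewrite gt_eqF.
have split_exp (t : R) : (j.+1 * m)%:R / 2 + t = m%:R / 2 * j.+1%:R + t.
  by rewrite natrM; ring.
rewrite (split_exp s) split_exp !powRD ?theta_neq0 ?implybT //.
rewrite powRrM powR_mulrn ?powR_ge0 // exprS; ring.
Qed.

Lemma integral_laplace_code_len_pow2 (s : R) beta : 0 <= s -> s <= 1 / 2 ->
  (\int[@lebesgue_measure R]_(x in [set: R])
     (code_len (2 ^ beta) (x + s) * laplace theta x)%:E
   = (1 + beta)%:R%:E + \sum_(j <oo)
       ((theta `^ ((j.+1 * 2 ^ beta)%:R / 2 - s)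
         + theta `^ ((j.+1 * 2 ^ beta)%:R / 2 + s)) / 2)%:E)%E.
Proof.
move=> s_ge0 s_le_half; set m := (2 ^ beta)%N.
have m_gt0 : (0 < m)%N by rewrite expn_gt0.
have jm_gt0 j : (0 < j.+1 * m)%N by rewrite muln_gt0.
have tail_ge0 j x : (0 <= (((j.+1 * m <= rice_map (x + s))%N : nat)%:R
                            * laplace theta x)%:E)%E.
  by rewrite lee_fin mulr_ge0 ?laplace_ge0.
under eq_integral do rewrite code_len_pow2_nneseries ?laplace_ge0 //.
rewrite ge0_integralD //=; last 4 first.
- by move=> x _; rewrite lee_fin mulr_ge0 ?laplace_ge0.
- apply/measurable_EFinP; apply: measurable_funM; first exact: measurable_cst.
  by apply/measurable_EFinP; exact: measurable_laplace.
- by move=> x _; apply: nneseries_ge0.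
- by apply: ge0_emeasurable_sum => // j _; exact: measurable_laplace_rice_tail.
under eq_integral do rewrite EFinM.
rewrite ge0_integralZl_EFin //; last 2 first.
- by move=> x _; rewrite lee_fin laplace_ge0.
- exact: measurable_laplace.
rewrite integral_laplace mule1 integral_nneseries //; last first.
  by move=> j; exact: measurable_laplace_rice_tail.
by under eq_eseriesr do rewrite integral_laplace_rice_tail //.
Qed.

Lemma powR_lt1 x : 0 < x -> theta `^ x < 1.
Proof. by move=> x_gt0; rewrite /powR gt_eqF // expR_lt1 pmulr_rlt0. Qed.

End laplace_density.

Lemma eseries_geometric (R : realType) (a z : R) : `|z| < 1 ->
  (\sum_(j <oo) (a * z ^+ j)%:E = (a / (1 - z))%:E)%E.
Proof.
move=> z_lt1; have cv := @cvg_geometric_series R a z z_lt1.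
rewrite (_ : (\sum_(j <oo) _)%E = limn (EFin \o series (geometric a z))).
  by rewrite EFin_lim ?(cvg_lim _ cv) //; apply/cvg_ex; exists (a / (1 - z)).
by apply: congr_lim; apply/funext => n; rewrite /= sumEFin.
Qed.

Theorem theorem1 (R : realType) (theta : R) (rho tau beta : nat)
  (htheta0 : 0 < theta) (htheta1 : theta < 1)
  (hrho : (0 < rho)%N) (htau : (0 < tau)%N) (hrt : (rho <= tau)%N) :
  let m := (2 ^ beta)%N in
  avg_code_len m rho tau theta =
  (1 + lg (m%:R : R)
   + 1 / 2 * (theta `^ (m%:R / 2) / (1 - theta `^ (m%:R / 2)))
     * (theta `^ (rho%:R / (2 * tau%:R)) + theta `^ (- (rho%:R / (2 * tau%:R)))))%:E.
Proof.
move=> m; set s := rho%:R / (2 * tau%:R) : R.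
have s_ge0 : 0 <= s by rewrite divr_ge0.
have s_le_half : s <= 1 / 2.
  have tau_gt0 : 0 < tau%:R :> R by rewrite ltr0n.
  have : rho%:R <= tau%:R :> R by rewrite ler_nat.
  by rewrite /s ler_pdivrMr ?mulr_gt0 //; lra.
have r_lt1 : theta `^ (m%:R / 2) < 1.
  by rewrite powR_lt1 // divr_gt0 // ltr0n expn_gt0.
rewrite /avg_code_len; under eq_integral do rewrite /code_len_prec -/s.
rewrite integral_laplace_code_len_pow2 //.
under eq_eseriesr do rewrite rice_tail_mass_geometric //.
rewrite eseries_geometric ?ger0_norm ?powR_ge0 // -EFinD lg_pow2; congr EFin.
have r_neq1 : 1 - theta `^ (m%:R / 2) != 0 by rewrite subr_eq0 gt_eqF.
by rewrite natrD; field.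
Qed.
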